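(* Let $X_0^*$ be a $\{1,2,\dots\}$-valued random variable with $\mathbf P(X_0^*\ge2)>0$ and $\mathbf E(X_0^*m^{X_0^*})<\infty$, and let $X_0$ have law $(1-p)\delta_0+pP_{X_0^*}$. If $p\in[p_c,1)$, then the system $(X_n)_{n\ge0}$ is $0$-regular with coefficient $\chi=1-p$.
   Context: Fix an integer $m\ge2$. A recursive system $(X_n)_{n\ge0}$: $X_{n+1}$ has the law of $(X_{n,1}+\cdots+X_{n,m}-1)^+$ with $X_{n,i}$ independent copies of $X_n$. $p_c:=\frac{1}{1+\mathbf E\{[(m-1)X_0^*-1]m^{X_0^*}\}}$; $p\ge p_c$ is equivalent to $\mathbf E\{[(m-1)X_0-1]m^{X_0}\}\ge0$. Regularity: for a $\mathbb Z_+$-valued random variable $\zeta$ with $\mathbf E(\zeta m^\zeta)<\infty$ and $\mathbf P(\zeta\ge2)>0$, set $\Lambda(\zeta):=\mathbf E(\zeta^3m^\zeta)\in(0,\infty]$ and, for integers $k\ge1$, $\Xi_k(\zeta):=\mathbf E[(\zeta\wedge k)^2((m-1)\zeta-1)m^\zeta]$. For $\beta\in[0,2]$ and $\chi\in(0,1]$, $\zeta$ is $\beta$-regular with coefficient $\chi$ if $\Xi_k(\zeta)\ge\chi\min\{\Lambda(\zeta),k^\beta\}$ for all integers $k\ge1$; a system is $\beta$-regular with coefficient $\chi$ if its $X_0$ is. *)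

(* classical reals. A Z_+-valued random variable is represented
   by its law r : nat -> R (r k = P(zeta = k)); expectations are series. *)
From Stdlib Require Import Reals.
Open Scope R_scope.

Definition is_law (r : nat -> R) : Prop :=
  (forall k, 0 <= r k) /\ infinite_sum r 1.

Definition summable (f : nat -> R) : Prop := exists l, infinite_sum f l.

Definition Em_terms (m : nat) (r : nat -> R) (k : nat) : R :=
  INR k * INR m ^ k * r k.

Definition crit_terms (m : nat) (r : nat -> R) (k : nat) : R :=
  ((INR m - 1) * INR k - 1) * INR m ^ k * r k.

Definition Lambda_terms (m : nat) (r : nat -> R) (k : nat) : R :=
  INR k ^ 3 * INR m ^ k * r k.

Definition Xi_terms (m : nat) (r : nat -> R) (K : nat) (k : nat) : R :=
  INR (Nat.min k K) ^ 2 * ((INR m - 1) * INR k - 1) * INR m ^ k * r k.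

(* zeta (with law r) is beta-regular with coefficient chi:
   the standing requirements E(zeta m^zeta) < oo, P(zeta >= 2) > 0,
   beta in [0,2], chi in (0,1], and for every integer K >= 1,
   Xi_K(zeta) (a convergent series) is >= chi * min{Lambda(zeta), K^beta},
   where Lambda(zeta) = +oo when its series diverges. *)
Definition beta_regular (m : nat) (beta chi : R) (r : nat -> R) : Prop :=
  summable (Em_terms m r) /\
  (exists k, (2 <= k)%nat /\ 0 < r k) /\
  0 <= beta <= 2 /\ 0 < chi <= 1 /\
  forall K : nat, (1 <= K)%nat ->
    exists Xi, infinite_sum (Xi_terms m r K) Xi /\
      (forall L, infinite_sum (Lambda_terms m r) L ->
         chi * Rmin L (Rpower (INR K) beta) <= Xi) /\
      (~ summable (Lambda_terms m r) ->
         chi * Rpower (INR K) beta <= Xi).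

Definition mix_law (p : R) (q : nat -> R) (k : nat) : R :=
  match k with
  | O => (1 - p) + p * q O
  | S _ => p * q k
  end.

(* Since beta = 0, the target bound is (1-p) min{Lambda, 1} <= (1-p), so it
   suffices to show Xi_K(X_0) >= 1 - p for every K >= 1.  Write E for the
   critical expectation E{[(m-1)X_0^* - 1] m^{X_0^*}}.  As X_0^* >= 1 and
   m >= 2, every term of E is nonnegative, hence E >= 0; and p >= 1/(1+E)
   rewrites as p E >= 1 - p.  Termwise, the k = 0 term of Xi_K(X_0) vanishes
   and for k >= 1 the factor (k /\ K)^2 lies in [1, K^2], which gives
     p [(m-1)k - 1] m^k q_k  <=  Xi-term_k  <=  K^2 (m-1) p k m^k q_k.
   The upper bound makes the Xi series converge (E(X_0^* m^{X_0^*}) < oo),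
   the lower bound gives Xi_K(X_0) >= p E >= 1 - p.  The file first links
   the Stdlib series with Coquelicot's, then proves a comparison
   principle for sandwiched series, the termwise facts, and finally the
   theorem. *)
From Stdlib Require Import Reals Lra Lia.
From Coquelicot Require Import Coquelicot.
Open Scope R_scope.

Lemma summable_ex_series (a : nat -> R) : summable a <-> ex_series a.
Proof.
  split; intros [l Hl]; exists l; apply is_series_Reals; exact Hl.
Qed.

Lemma series_sandwich (a b c : nat -> R) (A : R) :
  (forall k, 0 <= a k) -> (forall k, a k <= b k <= c k) ->
  is_series a A -> ex_series c ->
  exists B, is_series b B /\ A <= B.
Proof.
  intros Ha Habc HA Hc.
  assert (Hb : ex_series b).
  { apply (ex_series_le (K := R_AbsRing) (V := R_CompleteNormedModule)) with c;
      [|exact Hc].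
    intro k; change norm with Rabs; simpl.
    specialize (Ha k); specialize (Habc k).
    rewrite Rabs_pos_eq; lra. }
  exists (Series b); split; [exact (Series_correct _ Hb)|].
  rewrite <- (is_series_unique _ _ HA).
  apply Series_le; [|exact Hb].
  intro k; specialize (Ha k); specialize (Habc k); lra.
Qed.

Lemma series_nonneg (a : nat -> R) (A : R) :
  (forall k, 0 <= a k) -> is_series a A -> 0 <= A.
Proof.
  intros Ha HA.
  pose proof (is_series_scal_l 0 a A HA) as H0; rewrite Rmult_0_l in H0.
  destruct (series_sandwich (fun k => 0 * a k) a a 0) as [B [HB HAB]].
  - intro k; lra.
  - intro k; specialize (Ha k); lra.
  - exact H0.
  - exists A; exact HA.
  - rewrite <- (is_series_unique _ _ HA), (is_series_unique _ _ HB); exact HAB.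
Qed.

Section Terms.

Variables (m : nat) (q : nat -> R).
Hypothesis hm : (2 <= m)%nat.
Hypothesis hq_nonneg : forall k, 0 <= q k.
Hypothesis hq0 : q O = 0.

Lemma INR_m_ge2 : 2 <= INR m.
Proof. apply (le_INR 2); exact hm. Qed.

Lemma crit_weight_nonneg (k : nat) : (1 <= k)%nat -> 0 <= (INR m - 1) * INR k - 1.
Proof.
  intro Hk; assert (1 <= INR k) by (apply (le_INR 1); exact Hk).
  pose proof INR_m_ge2; nra.
Qed.

(* Every term of E{[(m-1)X_0^* - 1] m^{X_0^*}} is nonnegative, as X_0^* >= 1. *)
Lemma crit_terms_nonneg (k : nat) : 0 <= crit_terms m q k.
Proof.
  unfold crit_terms; destruct k as [|k].
  - rewrite hq0; lra.
  - pose proof (crit_weight_nonneg (S k) ltac:(lia)).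
    pose proof (pow_le (INR m) (S k) ltac:(pose proof INR_m_ge2; lra)).
    pose proof (hq_nonneg (S k)).
    apply Rmult_le_pos; [apply Rmult_le_pos|]; assumption.
Qed.

Lemma Em_terms_mix (p : R) (k : nat) :
  Em_terms m (mix_law p q) k = p * Em_terms m q k.
Proof.
  unfold Em_terms, mix_law; destruct k; simpl; [rewrite hq0|]; ring.
Qed.

Lemma sq_weight_bounds (c K t s u : R) :
  1 <= c <= K -> 0 <= t <= s -> 0 <= u ->
  u * t <= c ^ 2 * t * u <= K ^ 2 * s * u.
Proof.
  intros Hc Ht Hu.
  assert (Hc2 : 1 <= c ^ 2 <= K ^ 2).
  { split; [|apply pow_incr]; nra. }
  assert (0 <= t * u) by (apply Rmult_le_pos; lra).
  assert (t * u <= s * u) by (apply Rmult_le_compat_r; lra).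
  split; nra.
Qed.

Lemma Xi_terms_mix_bounds (p : R) (K k : nat) :
  0 <= p -> (1 <= K)%nat ->
  p * crit_terms m q k <= Xi_terms m (mix_law p q) K k
    <= (INR K ^ 2 * (INR m - 1) * p) * Em_terms m q k.
Proof.
  intros Hp HK.
  unfold Xi_terms, crit_terms, Em_terms, mix_law; destruct k as [|k].
  - rewrite hq0; simpl; lra.
  - assert (Hc : 1 <= INR (Nat.min (S k) K) <= INR K).
    { split; [apply (le_INR 1)|apply le_INR]; lia. }
    pose proof (crit_weight_nonneg (S k) ltac:(lia)) as Ht.
    pose proof (pow_le (INR m) (S k) ltac:(pose proof INR_m_ge2; lra)).
    pose proof (hq_nonneg (S k)).
    set (t := (INR m - 1) * INR (S k) - 1) in *.
    set (u := p * (INR m ^ S k * q (S k))).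
    assert (Hu : 0 <= u) by
      (apply Rmult_le_pos; [|apply Rmult_le_pos]; assumption).
    assert (Hts : t <= (INR m - 1) * INR (S k)) by (unfold t; lra).
    destruct (sq_weight_bounds _ _ _ _ _ Hc (conj Ht Hts) Hu) as [Hlo Hhi].
    replace (p * (t * _ * _)) with (u * t) by (unfold u; ring).
    replace (INR (Nat.min (S k) K) ^ 2 * t * _ * _)
      with (INR (Nat.min (S k) K) ^ 2 * t * u) by (unfold u; ring).
    replace (INR K ^ 2 * _ * p * _)
      with (INR K ^ 2 * ((INR m - 1) * INR (S k)) * u) by (unfold u; ring).
    exact (conj Hlo Hhi).
Qed.

End Terms.

Lemma pc_bound (E p : R) : 0 <= E -> 1 / (1 + E) <= p -> 1 - p <= p * E.
Proof.
  intros HE Hp.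
  apply Rmult_le_compat_r with (r := 1 + E) in Hp; [|lra].
  unfold Rdiv in Hp; rewrite Rmult_1_l, Rinv_l in Hp; lra.
Qed.

Theorem lemma2p1 (m : nat) (hm : (2 <= m)%nat) (q : nat -> R)
  (hq : is_law q) (hq0 : q O = 0)
  (hq2 : exists k, (2 <= k)%nat /\ 0 < q k)
  (hqm : summable (Em_terms m q))
  (E : R) (hE : infinite_sum (crit_terms m q) E)
  (p : R) (hpc : 1 / (1 + E) <= p) (hp1 : p < 1) :
  beta_regular m 0 (1 - p) (mix_law p q).
Proof.
  destruct hq as [hq_nonneg _].
  apply is_series_Reals in hE; apply summable_ex_series in hqm.
  assert (HE0 : 0 <= E)
    by exact (series_nonneg _ _ (crit_terms_nonneg m q hm hq_nonneg hq0) hE).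
  pose proof (pc_bound E p HE0 hpc) as HpE.
  assert (Hp0 : 0 < p) by nra.
  split; [|split; [|split; [lra|split; [lra|]]]].
  - apply summable_ex_series.
    apply ex_series_ext with (fun k => p * Em_terms m q k);
      [intro k; symmetry; apply Em_terms_mix; exact hq0|exact (ex_series_scal p _ hqm)].
  - destruct hq2 as [[|k] [Hk Hqk]]; [lia|].
    exists (S k); split; [exact Hk|simpl; nra].
  - intros K HK.
    rewrite Rpower_O by (apply (lt_INR 0); lia).
    destruct (series_sandwich (fun k => p * crit_terms m q k) (Xi_terms m (mix_law p q) K)
                (fun k => (INR K ^ 2 * (INR m - 1) * p) * Em_terms m q k) (p * E))
      as [Xi [HXi HpXi]].
    + intro k; pose proof (crit_terms_nonneg m q hm hq_nonneg hq0 k); nra.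
    + intro k; apply Xi_terms_mix_bounds; auto; lra.
    + exact (is_series_scal_l p _ _ hE).
    + exact (ex_series_scal _ _ hqm).
    + exists Xi; split; [apply is_series_Reals; exact HXi|split].
      * intros L _; pose proof (Rmin_r L 1); nra.
      * intros _; lra.
Qed.
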